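(* Let $X$ be a stacked simplicial complex of dimension $d$, and let $h,k$ be faces of $X$ whose union $h\cup k$ is not contained in any codimension one face. Then there exists a unique path between $h$ and $k$.
   Context: A simplicial complex $X$ on a finite vertex set $V$ is a family of subsets (faces) of $V$ closed under taking subsets, every element of $V$ lying in some face; facets are inclusion-maximal faces. $X$ is pure of dimension $d$ if every facet has $d+1$ elements; a codimension one face is a face with $d$ elements. $X$ is stacked if it is pure of some dimension $d$ and its facets can be ordered $F_0,F_1,\dots,F_k$ (a stacking order) such that for each $p\ge 1$, $F_p$ contains exactly one vertex $v_p$ not in $F_0\cup\dots\cup F_{p-1}$ (called the free vertex of $F_p$), and $F_p\setminus\{v_p\}\subseteq F_j$ for some $j<p$. A walk is a sequence of facets $f_1,\dots,f_p$ ($p\ge 1$) such that each $f_i\cap f_{i+1}$ has exactly $d$ elements; a path is a walk in which the faces $f_i\cap f_{i+1}$, $1\le i<p$, are pairwise distinct. For faces $h,k$ such that $h\cup k$ is not contained in any codimension one face, a path between $h$ and $k$, written $h\,|\,f_1,\dots,f_p\,|\,k$, is a path $f_1,\dots,f_p$ with $h\subseteq f_1$, $k\subseteq f_p$, and, if $p\ge 2$, $h\not\subseteq f_1\cap f_2$ and $k\not\subseteq f_p\cap f_{p-1}$. *)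

From mathcomp Require Import all_boot.
Set Implicit Arguments. Unset Strict Implicit. Unset Printing Implicit Defensive.

Section Simplicial.
Variable V : finType.
Implicit Types (X : {set {set V}}) (F G h k : {set V}) (s : seq {set V}).

Definition simplicial_complex X : Prop :=
  (forall F G, F \in X -> G \subset F -> G \in X) /\
  (forall v : V, exists F, F \in X /\ v \in F).

Definition facet X F : bool :=
  (F \in X) && [forall G in X, (F \subset G) ==> (G == F)].

Definition pure X (d : nat) : Prop :=
  forall F, facet X F -> #|F| = d.+1.

Definition codim1_face X (d : nat) F : bool := (F \in X) && (#|F| == d).

Definition stacking_order X s : Prop :=
  s != [::] /\ uniq s /\ (forall F, F \in s = facet X F) /\
  forall p, 0 < p < size s ->
    exists v : V,
      [set x in nth set0 s p | x \notin \bigcup_(j < p) nth set0 s j] = [set v] /\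
      exists2 j, j < p & nth set0 s p :\ v \subset nth set0 s j.

Definition stacked X (d : nat) : Prop :=
  pure X d /\ exists s, stacking_order X s.

Definition consec_caps s : seq {set V} :=
  [seq nth set0 s i :&: nth set0 s i.+1 | i <- iota 0 (size s).-1].

Definition walk X (d : nat) s : Prop :=
  s != [::] /\ (forall f, f \in s -> facet X f) /\
  (forall i, i.+1 < size s -> #|nth set0 s i :&: nth set0 s i.+1| = d).

Definition cpath X (d : nat) s : Prop := walk X d s /\ uniq (consec_caps s).

Definition path_between X (d : nat) h k s : Prop :=
  cpath X d s /\
  h \subset nth set0 s 0 /\ k \subset nth set0 s (size s).-1 /\
  (2 <= size s ->
     ~~ (h \subset nth set0 s 0 :&: nth set0 s 1) /\
     ~~ (k \subset nth set0 s (size s).-1 :&: nth set0 s (size s).-2)).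

End Simplicial.

(* Induction along the stacking order, with the complex given by its list of
   facets.  Adding a facet G with free vertex v creates a single new ridge
   R = G \ v, so every cap of a path at an occurrence of G equals R; as the
   caps of a path are distinct, G occurs at most once and only at an end.
   The induction also carries a convexity invariant: if both end facets of a
   path contain k, so do all its caps; hence a path starting at k never
   returns to a facet containing k.  For the new complex: if v lies in
   neither h nor k, a path between them cannot use G (h and k would both
   lie in R), so the old path is the unique one; if v lies in h, every path
   starts at G, and it is either [G] (when k lies in G too) or G followed by
   the unique old path from R to k. *)

From mathcomp Require Import all_boot.
Set Implicit Arguments. Unset Strict Implicit. Unset Printing Implicit Defensive.

Lemma ex_unique_image (A B : Type) (f : A -> B) (P : A -> Prop) (Q : B -> Prop) :
  (forall y, Q y -> exists x, y = f x) -> (forall x, Q (f x) <-> P x) ->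
  (exists! x, P x) -> exists! y, Q y.
Proof.
move=> Qf QP [x [Px uniqP]]; exists (f x); split; first exact/QP.
by move=> _ /[dup] /Qf [y ->] /QP /uniqP ->.
Qed.

Section Paths.
Variables (V : finType) (d : nat).
Implicit Types (t P Q T s : seq {set V}) (x y a b F G h k c : {set V}).

Fixpoint caps P :=
  match P with
  | x :: ((y :: _) as P') => x :&: y :: caps P'
  | _ => [::]
  end.
Arguments caps : simpl nomatch.

Definition facet_path t P :=
  [&& P != [::], all (fun F => F \in t) P, all (fun c => #|c| == d) (caps P) & uniq (caps P)].

Definition starts_at h P :=
  match P with
  | x :: y :: _ => (h \subset x) && ~~ (h \subset x :&: y)
  | [:: x] => h \subset x
  | [::] => false
  end.

Definition facet_path_between t h k P :=
  [&& facet_path t P, starts_at h P & starts_at k (rev P)].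

Definition unique_path t h k := exists! P, facet_path_between t h k P.

Lemma caps_cat x s1 y s2 :
  caps (x :: s1 ++ y :: s2) = caps (x :: s1) ++ last x s1 :&: y :: caps (y :: s2).
Proof. by elim: s1 x => [|z s1 IH] x //=; rewrite IH. Qed.

Lemma caps_rcons x s y : caps (rcons (x :: s) y) = rcons (caps (x :: s)) (last x s :&: y).
Proof. by rewrite -cats1 caps_cat cats1. Qed.

Lemma caps_rev P : caps (rev P) = rev (caps P).
Proof.
elim: P => [|x [|y P] IH] //.
have -> : caps (rev [:: x, y & P]) = rcons (caps (rev (y :: P))) (y :&: x).
  rewrite [rev [:: x, y & P]]rev_cons rev_cons; case: (rev P) => [|z s] //.
  by rewrite !rcons_cons caps_rcons last_rcons.
by rewrite IH [caps _]/= rev_cons setIC.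
Qed.

Lemma capsP P c : c \in caps P ->
  exists s1 a b s2, P = rcons (rcons s1 a) b ++ s2 /\ c = a :&: b.
Proof.
elim: P => [|x [|y P] IH] //; rewrite inE => /orP [/eqP ->|/IH [s1 [a [b [s2 [-> ->]]]]]].
  by exists [::], x, y, P.
by exists (x :: s1), a, b, s2.
Qed.

Lemma facet_path_cons t x y s : facet_path t [:: x, y & s] =
  [&& x \in t, #|x :&: y| == d, x :&: y \notin caps (y :: s) & facet_path t (y :: s)].
Proof.
rewrite /facet_path /=.
case: (x \in t); case: (y \in t); case: (#|x :&: y| == d);
  by case: (x :&: y \in caps (y :: s)); rewrite /= ?andbF.
Qed.

Lemma facet_path_mem t P x : facet_path t P -> x \in P -> x \in t.
Proof. by case/and4P => _ /allP Pt _ _ /Pt. Qed.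

Lemma facet_path_sub t1 t2 P : {subset t1 <= t2} -> facet_path t1 P -> facet_path t2 P.
Proof.
move=> t12 /and4P [P0 /allP Pt1 Pd Pu]; apply/and4P; split => //.
by apply/allP => x /Pt1 /t12.
Qed.

Lemma facet_path_catl t s1 s2 : s1 != [::] -> facet_path t (s1 ++ s2) -> facet_path t s1.
Proof.
case: s1 => [|x s1] // _; case: s2 => [|y s2]; first by rewrite cats0.
rewrite /facet_path caps_cat !all_cat cat_uniq.
by case/and4P => _ /andP [Pt _] /andP [Pd _] /and3P [Pu _ _]; apply/and4P.
Qed.

Lemma facet_path_rev t P : facet_path t (rev P) = facet_path t P.
Proof. by rewrite /facet_path caps_rev !all_rev rev_uniq -!size_eq0 size_rev. Qed.

Lemma facet_path_catr t s1 s2 : s2 != [::] -> facet_path t (s1 ++ s2) -> facet_path t s2.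
Proof.
move=> s2_0; rewrite -facet_path_rev rev_cat => /facet_path_catl.
by rewrite facet_path_rev -size_eq0 size_rev size_eq0; apply.
Qed.

Lemma starts_at_head h x s : starts_at h (x :: s) -> h \subset x.
Proof. by case: s => [|y s] // /andP []. Qed.

Lemma starts_at_cat h s1 s2 : 1 < size s1 -> starts_at h (s1 ++ s2) = starts_at h s1.
Proof. by case: s1 => [|x [|y s1]]. Qed.

Lemma starts_at_rev_cons k x T : ~~ (k \subset x) -> T != [::] ->
  starts_at k (rev (x :: T)) = starts_at k (rev T).
Proof.
case: T => [|y [|z T]] // kx _; last by rewrite rev_cons -cats1 starts_at_cat ?size_rev.
by rewrite /= (contraNN (fun kyx => subset_trans kyx (subsetIr y x)) kx) andbT.
Qed.

Lemma facet_path_between_rev t h k P :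
  facet_path_between t h k (rev P) = facet_path_between t k h P.
Proof. by rewrite /facet_path_between revK facet_path_rev; congr andb; apply: andbC. Qed.

Lemma unique_path_sym t h k : unique_path t k h -> unique_path t h k.
Proof.
apply: (ex_unique_image (f := rev)) => [P _|P]; first by exists (rev P); rewrite revK.
by rewrite facet_path_between_rev.
Qed.

Lemma facet_path_single F P : #|F| = d.+1 -> facet_path [:: F] P -> P = [:: F].
Proof.
move=> cardF fP; have memF x : x \in P -> x = F.
  by move/(facet_path_mem fP); rewrite inE => /eqP.
case: P fP memF => [|x [|y P]] fP memF; first by case/andP: fP.
  by rewrite (memF x) ?mem_head.
move: fP; rewrite facet_path_cons (memF x) ?mem_head // (memF y) ?inE ?eqxx ?orbT //.
by rewrite setIid cardF eqn_leq ltnn.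
Qed.

Definition path_convex t := forall P k, facet_path t P ->
  k \subset head set0 P -> k \subset last set0 P -> all (fun c => k \subset c) (caps P).

Lemma path_convex_single F : #|F| = d.+1 -> path_convex [:: F].
Proof. by move=> cardF P k /(facet_path_single cardF) ->. Qed.

Lemma path_convex_return t P k : path_convex t -> facet_path t P ->
  starts_at k P -> k \subset last set0 P -> size P <= 1.
Proof.
move=> cvx; case: P => [|x [|y P]] // fP /andP [kx /negP kxy] kl.
by case/andP: (cvx _ k fP kx kl).
Qed.

Lemma starts_at_caps t T h c : path_convex t -> facet_path t T -> starts_at h T ->
  c \in caps T -> ~~ (h \subset c).
Proof.
move=> cvx fT hT /capsP [s1 [a [b [s2 [ET ->]]]]]; apply/negP => hab.
set Pr := rcons (rcons s1 a) b; have sizePr : 1 < size Pr by rewrite !size_rcons.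
have fPr : facet_path t Pr.
  by rewrite ET in fT; apply: facet_path_catl fT; rewrite -size_eq0 -lt0n ltnW.
rewrite ET starts_at_cat // in hT.
have := path_convex_return cvx fPr hT; rewrite last_rcons (subset_trans hab (subsetIr a b)).
by rewrite leqNgt sizePr => /(_ isT).
Qed.

Definition covered t h := has (fun F => h \subset F) t.

Definition separated t h k := forall c, #|c| = d -> covered t c -> ~~ (h :|: k \subset c).

Lemma separated_sym t h k : separated t h k -> separated t k h.
Proof. by move=> sep c cd cc; rewrite setUC; apply: sep. Qed.

Lemma unique_path_single F h k : #|F| = d.+1 ->
  covered [:: F] h -> covered [:: F] k -> unique_path [:: F] h k.
Proof.
rewrite /covered /= !orbF => cardF hF kF; exists [:: F]; split.
  by rewrite /facet_path_between /facet_path /= hF kF mem_head.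
by move=> P /and3P [/(facet_path_single cardF) ->].
Qed.

Inductive stacked_facets : seq {set V} -> Prop :=
  | stacked_facets1 F : #|F| = d.+1 -> stacked_facets [:: F]
  | stacked_facets_rcons t G v F : stacked_facets t -> #|G| = d.+1 -> v \in G ->
      (forall U, U \in t -> v \notin U) -> F \in t -> G :\ v \subset F ->
      stacked_facets (rcons t G).

Section StackingStep.
Variables (t : seq {set V}) (G : {set V}) (v : V) (F0 : {set V}).
Hypotheses (cardG : #|G| = d.+1) (vG : v \in G) (v_new : forall U, U \in t -> v \notin U)
  (F0t : F0 \in t) (ridge_sub_F0 : G :\ v \subset F0).

Let t' := rcons t G.
Let R := G :\ v.

Lemma card_ridge : #|R| = d.
Proof. by move: cardG; rewrite (cardsD1 v G) vG => -[]. Qed.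

Lemma mem_step x : (x \in t') = (x == G) || (x \in t).
Proof. by rewrite mem_rcons inE. Qed.

Lemma sub_step : {subset t <= t'}.
Proof. by move=> x xt; rewrite mem_step xt orbT. Qed.

Lemma facet_path_notin_new P : facet_path t P -> G \notin P.
Proof. by move=> fP; apply/negP => /(facet_path_mem fP) /v_new; rewrite vG. Qed.

Lemma facet_path_restrict P : facet_path t' P -> G \notin P -> facet_path t P.
Proof.
move=> fP GP; case/and4P: (fP) => P0 _ Pd Pu; apply/and4P; split => //.
apply/allP => x xP; have := facet_path_mem fP xP; rewrite mem_step.
by case: eqP => // xG; rewrite -xG xP in GP.
Qed.

Lemma cap_new_sub y : y \in t -> G :&: y \subset R.
Proof.
move=> yt; apply/subsetP => x /setIP [xG xy]; rewrite !inE xG andbT.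
by apply: contraNneq (v_new yt) => <-.
Qed.

Lemma cap_new_ridge y : y \in t -> R \subset y -> G :&: y = R.
Proof. by move=> yt Ry; apply/eqP; rewrite eqEsubset cap_new_sub // subsetI subD1set. Qed.

Lemma adjacent_new x : x \in t' -> #|G :&: x| = d -> x \in t /\ G :&: x = R.
Proof.
rewrite mem_step => /orP [/eqP -> | xt] cGx.
  by move: cGx; rewrite setIid cardG => /esym /n_Sn.
by split=> //; apply/eqP; rewrite eqEcard cap_new_sub // card_ridge cGx leqnn.
Qed.

Lemma new_facet_inner s1 s2 : facet_path t' (s1 ++ G :: s2) -> s1 = [::] \/ s2 = [::].
Proof.
case/lastP: s1 => [|s1 a]; first by left.
case: s2 => [|y s2]; first by right.
rewrite cat_rcons => /facet_path_catr /= /(_ isT).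
rewrite !facet_path_cons => /and4P [a_t' aG /negP aG_caps /and4P [_ /eqP Gy _ fP]].
have [_ aGR] : a \in t /\ G :&: a = R by apply: adjacent_new; rewrite // setIC; apply/eqP.
have [_ GyR] := adjacent_new (facet_path_mem fP (mem_head _ _)) Gy.
by case: aG_caps; rewrite [caps _]/= setIC aGR -GyR mem_head.
Qed.

Lemma facet_path_new_twice s : ~~ facet_path t' (G :: rcons s G).
Proof.
case: s => [|y s]; first by rewrite facet_path_cons setIid cardG eqn_leq ltnn /= andbF.
rewrite rcons_cons facet_path_cons; apply/negP => /and4P [_ /eqP Gy /negP Gy_caps fP].
have [_ GyR] := adjacent_new (facet_path_mem fP (mem_head _ _)) Gy.
move: fP; rewrite -rcons_cons => fP.
have last_t' : last y s \in t'.
  by apply: (facet_path_mem fP); rewrite mem_rcons inE mem_last orbT.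
case/and4P: fP => _ _; rewrite caps_rcons all_rcons => /andP [/eqP lG _] _.
have [_ lGR] : last y s \in t /\ G :&: last y s = R by apply: adjacent_new; rewrite // setIC.
case: Gy_caps; rewrite -rcons_cons caps_rcons mem_rcons.
by rewrite [last y s :&: G]setIC lGR -GyR mem_head.
Qed.

Lemma new_facet_head P : facet_path t' (G :: P) -> G \notin P.
Proof.
move=> fP; apply/negP => GP; case/splitPr: GP fP => s1 s2 fP.
have [//|s2_0] := new_facet_inner (s1 := G :: s1) fP.
by move: fP; rewrite s2_0 cats1; apply/negP; apply: facet_path_new_twice.
Qed.

Lemma new_facet_end P : facet_path t' P -> G \in P ->
  exists P1, P = G :: P1 \/ P = rcons P1 G.
Proof.
move=> fP GP; case/splitPr: GP fP => s1 s2 /new_facet_inner [-> | ->].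
  by exists s2; left.
by exists s1; right; rewrite cats1.
Qed.

Lemma path_convex_step : path_convex t -> path_convex t'.
Proof.
move=> cvx.
have from_new P k : facet_path t' (G :: P) -> k \subset G -> k \subset last G P ->
    all (fun c => k \subset c) (caps (G :: P)).
  case: P => [|y P] // fP kG kl; have GP := new_facet_head fP.
  move: fP; rewrite facet_path_cons => /and4P [_ /eqP Gy _ fP].
  have [_ GyR] := adjacent_new (facet_path_mem fP (mem_head _ _)) Gy.
  have fyP := facet_path_restrict fP GP.
  have kR : k \subset R.
    rewrite subsetD1 kG (contra (subsetP kl v)) //.
    exact: v_new (facet_path_mem fyP (mem_last _ _)).
  rewrite /= GyR kR; apply: cvx fyP _ kl.
  by rewrite (subset_trans kR) // -GyR subsetIr.
move=> P k fP kh kl; case GP: (G \in P); last exact: cvx (facet_path_restrict fP (negbT GP)) kh kl.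
have [P1 [EP | EP]] := new_facet_end fP GP; rewrite EP in fP kh kl *; first exact: from_new.
rewrite -(revK (rcons P1 G)) rev_rcons caps_rev all_rev; rewrite last_rcons in kl.
apply: from_new => //; first by rewrite -rev_rcons facet_path_rev.
by case: P1 kh {fP EP} => [|y P1] //=; rewrite rev_cons last_rcons.
Qed.

Lemma covered_step x : covered t' x = covered t x || (x \subset G).
Proof. by rewrite /covered has_rcons orbC. Qed.

Lemma covered_step_new x : covered t' x -> v \in x -> x \subset G.
Proof.
rewrite covered_step => /orP [/hasP [U Ut xU] vx | //].
by have := v_new Ut; rewrite (subsetP xU).
Qed.

Lemma covered_step_old x : covered t' x -> v \notin x -> covered t x.
Proof.
rewrite covered_step => /orP [// | xG vx]; apply/hasP; exists F0 => //.
by apply: subset_trans ridge_sub_F0; rewrite subsetD1 xG.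
Qed.

Lemma path_from_new h Q : facet_path t' Q -> starts_at h Q -> v \in h ->
  exists Q1, Q = G :: Q1.
Proof.
case: Q => [|x Q1] // fQ /starts_at_head hx vh.
move: (facet_path_mem fQ (mem_head _ _)); rewrite mem_step => /orP [/eqP -> | xt].
  by exists Q1.
by have := v_new xt; rewrite (subsetP hx).
Qed.

Hypothesis cvx : path_convex t.

Lemma facet_path_new_cons T : G \notin T -> T != [::] ->
  facet_path t' (G :: T) = facet_path t T && starts_at R T.
Proof.
case: T => [|y T] // GT _; rewrite facet_path_cons.
apply/and4P/andP => [[_ /eqP Gy /negP Gy_caps fT] | [fT RT]].
  have [yt GyR] := adjacent_new (facet_path_mem fT (mem_head _ _)) Gy.
  split; first exact: facet_path_restrict.
  case: T {GT} fT Gy_caps => [|w T] fT Gy_caps; rewrite /= -GyR subsetIr //=.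
  apply/negP => sub; apply: Gy_caps; rewrite [caps _]/= inE eqEcard sub Gy.
  by move: fT; rewrite facet_path_cons => /and4P [_ /eqP -> _ _]; rewrite leqnn.
have yt := facet_path_mem fT (mem_head _ _).
rewrite cap_new_ridge ?(starts_at_head RT) // card_ridge mem_rcons mem_head.
split => //; last exact: facet_path_sub sub_step fT.
by apply/negP => /(starts_at_caps cvx fT RT); rewrite subxx.
Qed.

Lemma facet_path_between_new_cons h k T : v \in h -> h \subset G -> ~~ (k \subset G) ->
  facet_path_between t' h k (G :: T) = facet_path_between t R k T.
Proof.
move=> vh hG kG; have [GT | GT] := boolP (G \in T).
  apply/idP/idP => /and3P [fT _ _].
    by move: (new_facet_head fT); rewrite GT.
  by move: (facet_path_notin_new fT); rewrite GT.
case: T GT => [|y T] GT; first by rewrite /facet_path_between /= (negbTE kG) !andbF.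
rewrite /facet_path_between facet_path_new_cons // starts_at_rev_cons //.
case fT: (facet_path t (y :: T)) => //.
have hGy : ~~ (h \subset G :&: y).
  apply: contra (v_new (facet_path_mem fT (mem_head _ _))) => /subsetP /(_ v vh).
  by case/setIP.
by rewrite [starts_at h _]/= hG hGy.
Qed.

Lemma unique_path_within_new h k : v \in h -> h \subset G -> k \subset G ->
  unique_path t' h k.
Proof.
move=> vh hG kG; exists [:: G]; split.
  by rewrite /facet_path_between /facet_path /= hG kG mem_rcons mem_head.
move=> Q /and3P [fQ hQ kQ]; have [[|y Q1] EQ] := path_from_new fQ hQ vh; first by [].
rewrite EQ in fQ kQ; exfalso.
have fQr : facet_path t' (rev (G :: y :: Q1)) by rewrite facet_path_rev.
have kl : k \subset last set0 (rev (G :: y :: Q1)) by rewrite rev_cons last_rcons.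
by have := path_convex_return (path_convex_step cvx) fQr kQ kl; rewrite size_rev.
Qed.

Hypothesis unique_old :
  forall h k, covered t h -> covered t k -> separated t h k -> unique_path t h k.

Lemma unique_path_via_ridge h k : v \in h -> h \subset G -> ~~ (k \subset G) ->
  covered t k -> unique_path t' h k.
Proof.
move=> vh hG kG kt.
have Rt : covered t R by apply/hasP; exists F0.
have sepRk : separated t R k.
  move=> c cd _; apply/negP; rewrite subUset => /andP [Rc kc].
  have cR : c = R by apply/eqP; rewrite eq_sym eqEcard Rc card_ridge cd leqnn.
  by move: kG; rewrite (subset_trans kc) // cR subsetDl.
apply: (ex_unique_image (f := cons G) _ _ (unique_old Rt kt sepRk)) => [Q | T].
  by case/and3P => fQ hQ _; have [Q1 ->] := path_from_new fQ hQ vh; exists Q1.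
by rewrite facet_path_between_new_cons.
Qed.

Lemma facet_path_between_not_from_new h k Q : v \notin h -> v \notin k -> separated t' h k ->
  ~~ facet_path_between t' h k (G :: Q).
Proof.
move=> vh vk sep; apply/negP => /and3P [fQ hQ kQ].
have hR : h \subset R by rewrite subsetD1 vh (starts_at_head hQ).
case: Q fQ hQ kQ => [|y Q] fQ hQ kQ.
  have kR : k \subset R by rewrite subsetD1 vk andbT.
  have := sep R card_ridge; rewrite covered_step subD1set orbT subUset hR kR.
  by move/(_ isT).
move: fQ; rewrite facet_path_cons => /and4P [_ /eqP Gy _ fQ].
have [_ GyR] := adjacent_new (facet_path_mem fQ (mem_head _ _)) Gy.
by case/andP: hQ => _; rewrite GyR hR.
Qed.

Lemma unique_path_avoiding_new h k : v \notin h -> v \notin k ->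
  covered t' h -> covered t' k -> separated t' h k -> unique_path t' h k.
Proof.
move=> vh vk ht kt sep.
have sep_old : separated t h k by move=> c cd ct; apply: sep; rewrite // covered_step ct.
have := unique_old (covered_step_old ht vh) (covered_step_old kt vk) sep_old.
apply: (ex_unique_image (f := id)) => [Q _ | Q]; first by exists Q.
split=> [pQ | /and3P [fQ hQ kQ]]; last first.
  by rewrite /facet_path_between (facet_path_sub sub_step fQ) hQ kQ.
case/and3P: (pQ) => fQ hQ kQ; rewrite /facet_path_between hQ kQ !andbT.
apply: (facet_path_restrict fQ); apply/negP => GQ.
have [Q1 [EQ | EQ]] := new_facet_end fQ GQ; rewrite EQ in pQ.
  by move: pQ; apply/negP; apply: facet_path_between_not_from_new.
move: pQ; rewrite -[rcons Q1 G]revK rev_rcons facet_path_between_rev; apply/negP.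
by apply: facet_path_between_not_from_new => //; apply: separated_sym.
Qed.

Lemma unique_path_step h k : covered t' h -> covered t' k -> separated t' h k ->
  unique_path t' h k.
Proof.
wlog vhk : h k / (v \in h) || (v \notin k).
  move=> wlog_ ht kt sep; have [vh | vh] := boolP (v \in h).
    by apply: wlog_; rewrite ?vh.
  have [vk | vk] := boolP (v \in k); last by apply: wlog_; rewrite ?vk ?orbT.
  by apply: unique_path_sym; apply: wlog_ => //; [rewrite vk | apply: separated_sym].
move=> ht kt sep; have [vh | vh] := boolP (v \in h).
  have hG := covered_step_new ht vh.
  have [kG | kG] := boolP (k \subset G); first exact: unique_path_within_new.
  by apply: unique_path_via_ridge => //; move: kt; rewrite covered_step (negbTE kG) orbF.
by apply: unique_path_avoiding_new => //; rewrite (negbTE vh) in vhk.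
Qed.

End StackingStep.

Lemma stacked_path_convex t : stacked_facets t -> path_convex t.
Proof.
elim=> [F cardF | s G v F _ cvx cardG vG v_new _ _]; first exact: path_convex_single.
exact: (path_convex_step cardG vG v_new).
Qed.

Lemma stacked_unique_path t : stacked_facets t ->
  forall h k, covered t h -> covered t k -> separated t h k -> unique_path t h k.
Proof.
elim=> [F cardF | s G v F st IH cardG vG v_new Fs GF] h k.
  by move=> ht kt _; apply: unique_path_single.
exact: (unique_path_step cardG vG v_new Fs GF (stacked_path_convex st) IH).
Qed.

End Paths.
Arguments caps {V} _ : simpl nomatch.

Section Complexes.
Variables (V : finType) (X : {set {set V}}) (d : nat).
Implicit Types (s Q : seq {set V}) (h k : {set V}).

Lemma consec_capsE s : consec_caps s = caps s.
Proof.
elim: s => [|x [|y s] IH] //; rewrite [caps _]/= -IH /consec_caps /=; congr cons.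
by rewrite -[1]/(1 + 0) iotaDl -map_comp.
Qed.

Lemma all_capsP (a : pred {set V}) Q : reflect
  (forall i, i.+1 < size Q -> a (nth set0 Q i :&: nth set0 Q i.+1)) (all a (caps Q)).
Proof.
rewrite -consec_capsE /consec_caps all_map.
apply: (iffP allP) => [aQ i iQ | aQ i]; first by apply: aQ; rewrite mem_iota ltn_predRL.
by rewrite mem_iota ltn_predRL; apply: aQ.
Qed.

Lemma starts_at_nth h Q : Q != [::] -> starts_at h Q <->
  h \subset nth set0 Q 0 /\ (1 < size Q -> ~~ (h \subset nth set0 Q 0 :&: nth set0 Q 1)).
Proof.
case: Q => [|x [|y Q]] // _ /=; first by split=> [hx | []].
by split=> [/andP [hx hxy] | [hx /(_ isT) hxy]]; last rewrite hx hxy.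
Qed.

Lemma starts_at_rev_nth k Q : Q != [::] -> starts_at k (rev Q) <->
  k \subset nth set0 Q (size Q).-1 /\
  (1 < size Q -> ~~ (k \subset nth set0 Q (size Q).-1 :&: nth set0 Q (size Q).-2)).
Proof.
move=> Q0; have Qr0 : rev Q != [::] by rewrite -size_eq0 size_rev size_eq0.
have sQ : 0 < size Q by rewrite lt0n size_eq0.
apply: (iff_trans (starts_at_nth _ Qr0)); rewrite size_rev nth_rev // subn1.
by split=> -[kQ kQ2]; split=> // sQ2; move: (kQ2 sQ2); rewrite nth_rev // subn2.
Qed.

Lemma path_betweenE s h k Q : (forall F, (F \in s) = facet X F) ->
  path_between X d h k Q <-> facet_path_between d s h k Q.
Proof.
move=> sX; have memsP : reflect (forall f, f \in Q -> facet X f) (all (fun F => F \in s) Q).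
  by apply: (iffP allP) => QX f /QX; rewrite sX.
rewrite /path_between /cpath /walk consec_capsE /facet_path_between /facet_path.
split=> [[[[Q0 [/memsP QX Qd]] Qu] [hQ [kQ hkQ]]] |
         /and3P [/and4P [Q0 /memsP QX /all_capsP Qd Qu] hQ kQ]].
  apply/and3P; split.
  - by apply/and4P; split=> //; apply/all_capsP => i /Qd ->.
  - by apply/(starts_at_nth _ Q0); split=> // /hkQ [].
  - by apply/(starts_at_rev_nth _ Q0); split=> // /hkQ [].
have [hQ0 hQ1] := (starts_at_nth _ Q0).1 hQ.
have [kQ0 kQ1] := (starts_at_rev_nth _ Q0).1 kQ.
by do !split=> //; [move=> i /Qd /eqP | apply: hQ1 | apply: kQ1].
Qed.

Lemma stacking_order_stacked s : pure X d -> stacking_order X s -> stacked_facets d s.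
Proof.
move=> Xd [s0 [_ [sX st]]].
have card_s F : F \in s -> #|F| = d.+1 by rewrite sX; apply: Xd.
suff stack_take n : 0 < n <= size s -> stacked_facets d (take n s).
  by rewrite -(take_size s); apply: stack_take; rewrite lt0n size_eq0 s0 leqnn.
elim: n => [|[|n] IHn] // ns.
  case: s s0 card_s {sX st IHn} ns => [|x s] // _ card_s _.
  by rewrite /= take0; apply: stacked_facets1; apply: card_s; rewrite mem_head.
have {}ns : n.+1 < size s := ns.
rewrite (take_nth set0 ns).
have [v [free_v [j jn Gj]]] := st n.+1 ns.
have /setIdP [vG v_new] :
    v \in [set x in nth set0 s n.+1 | x \notin \bigcup_(j < n.+1) nth set0 s j].
  by rewrite free_v set11.
apply: (stacked_facets_rcons (v := v) (F := nth set0 s j)) => //.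
- exact/IHn/ltnW.
- by apply: card_s; rewrite mem_nth.
- move=> U /(nthP set0) [i]; rewrite size_take ns => i_n <-; rewrite nth_take //.
  by apply: contra v_new => vU; apply/bigcupP; exists (Ordinal i_n).
- by rewrite -(nth_take set0 jn) mem_nth // size_take ns.
Qed.

Lemma face_in_facet x : x \in X -> exists2 F, facet X F & x \subset F.
Proof.
move=> xX; have xP : (x \in X) && (x \subset x) by rewrite xX subxx.
case: (@arg_maxnP _ x (fun F => (F \in X) && (x \subset F)) (fun F => #|F|) xP).
move=> F /andP [FX xF] Fmax; exists F => //.
rewrite /facet FX; apply/forall_inP => G GX; apply/implyP => FG.
by rewrite eq_sym eqEcard FG; apply: Fmax; rewrite GX (subset_trans xF FG).
Qed.

End Complexes.

Theorem lemma2p9 (V : finType) (X : {set {set V}}) (d : nat) (h k : {set V}) :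
  simplicial_complex X -> stacked X d ->
  h \in X -> k \in X ->
  (forall c, codim1_face X d c -> ~~ (h :|: k \subset c)) ->
  exists! s : seq {set V}, path_between X d h k s.
Proof.
move=> [X_closed _] [Xd [s so]] hX kX sep_hk.
have sX : forall F, (F \in s) = facet X F by case: so => _ [_ []].
have covered_s x : x \in X -> covered s x.
  by case/face_in_facet => F; rewrite -sX => Fs xF; apply/hasP; exists F.
have sep : separated d s h k.
  move=> c cd /hasP [F]; rewrite sX => /andP [FX _] cF; apply: sep_hk.
  by rewrite /codim1_face (X_closed F) // cd eqxx.
have := stacked_unique_path (stacking_order_stacked Xd so) (covered_s h hX) (covered_s k kX) sep.
by apply: (ex_unique_image (f := id)) => [Q _ | Q]; [exists Q | apply: path_betweenE].
Qed.
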